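(* For $m=7$ and for every integer $m\ge 10$ we have $\ell_m<(m-\ell_m)(m-\ell_m+1)$.
   Context: For integers $m\ge2$ and real $\ell\in(0,m]$, $f_m(\ell)=\frac1{\ell}\left(\binom{\ell}{2}+\binom{m-\ell+1}{2}\right)=\ell+\frac{m^2+m}{2\ell}-m-1$. Let $\lambda_m=\frac{\sqrt{2m^2+2m}}{2}$, and let $\ell_m\in\{\lfloor\lambda_m\rfloor,\lceil\lambda_m\rceil\}$ be such that $f_m(\ell_m)=\min\{f_m(\lfloor\lambda_m\rfloor),f_m(\lceil\lambda_m\rceil)\}$, with the convention that if $\lfloor\lambda_m\rfloor\ne\lceil\lambda_m\rceil$ and $f_m(\lfloor\lambda_m\rfloor)=f_m(\lceil\lambda_m\rceil)$, then $\ell_m=\lfloor\lambda_m\rfloor$. *)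

From Stdlib Require Import Reals ZArith Lra Lia.
Open Scope R_scope.

Definition Rfloor (x : R) : Z := Int_part x.
Definition Rceil (x : R) : Z := (- Int_part (- x))%Z.

Definition binom2 (x : R) : R := x * (x - 1) / 2.

Definition f (m : nat) (l : R) : R :=
  / l * (binom2 l + binom2 (INR m - l + 1)).

Definition lambda (m : nat) : R :=
  sqrt (2 * INR m ^ 2 + 2 * INR m) / 2.

Definition ell (m : nat) : Z :=
  let a := Rfloor (lambda m) in
  let b := Rceil (lambda m) in
  if Rle_dec (f m (IZR a)) (f m (IZR b)) then a else b.

(* Since [ell m] is the floor or the ceiling of [lambda m], it is less than
   [lambda m + 1], and [lambda m ^ 2 = (m^2 + m)/2]; so [2 (ell m - 1)^2 < m^2 + m].
   Writing [k = m - ell m], this integer inequality forces [k(k+1) > ell m] as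
   soon as [m >= 12].  For [m = 7, 10, 11] the bound is too weak, and [ell m]
   is computed exactly: it equals the floor of [lambda m] (namely 5, 7, 8). *)

From Pilot Require Import Defs.
From Stdlib Require Import Reals ZArith Lra Lia.
Open Scope R_scope.

Lemma Rfloor_le (x : R) : IZR (Rfloor x) <= x.
Proof. unfold Rfloor. destruct (base_Int_part x); lra. Qed.

Lemma Rceil_lt_succ (x : R) : IZR (Rceil x) < x + 1.
Proof. unfold Rceil. rewrite opp_IZR. destruct (base_Int_part (- x)); lra. Qed.

Lemma Rfloor_eq (x : R) (k : Z) : IZR k <= x < IZR k + 1 -> Rfloor x = k.
Proof. intros Hx. symmetry. apply Int_part_spec. lra. Qed.

Lemma Rceil_eq (x : R) (k : Z) : IZR k - 1 < x <= IZR k -> Rceil x = k.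
Proof.
  intros Hx. unfold Rceil. rewrite <- (Int_part_spec (- x) (- k)); [lia |].
  rewrite opp_IZR. lra.
Qed.

Lemma lambda_ge0 (m : nat) : 0 <= lambda m.
Proof. unfold lambda. pose proof (sqrt_pos (2 * INR m ^ 2 + 2 * INR m)). lra. Qed.

Lemma lambda_sq (m : nat) : lambda m ^ 2 = (INR m ^ 2 + INR m) / 2.
Proof.
  unfold lambda. pose proof (pos_INR m).
  assert (Hpos : 0 <= 2 * INR m ^ 2 + 2 * INR m) by nra.
  pose proof (sqrt_sqrt _ Hpos). nra.
Qed.

Lemma ell_lt_lambda_succ (m : nat) : IZR (ell m) < lambda m + 1.
Proof.
  unfold ell. destruct Rle_dec.
  - pose proof (Rfloor_le (lambda m)). lra.
  - apply Rceil_lt_succ.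
Qed.

Lemma ell_pred_sq_lt (m : nat) :
  (1 < ell m)%Z -> (2 * (ell m - 1) ^ 2 < Z.of_nat m ^ 2 + Z.of_nat m)%Z.
Proof.
  intros Hell. apply lt_IZR. rewrite !Z.pow_2_r.
  rewrite plus_IZR, !mult_IZR, minus_IZR, <- INR_IZR_INZ.
  apply IZR_lt in Hell.
  pose proof (ell_lt_lambda_succ m). pose proof (lambda_sq m).
  pose proof (lambda_ge0 m). simpl in *. nra.
Qed.

Lemma lt_pronic_sub (M z : Z) :
  (12 <= M)%Z -> ((1 < z)%Z -> (2 * (z - 1) ^ 2 < M ^ 2 + M)%Z) ->
  (z < (M - z) * (M - z + 1))%Z.
Proof.
  intros HM Hz.
  destruct (Z.le_gt_cases z 1) as [Hz1 | Hz1]; [nia |].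
  specialize (Hz Hz1).
  destruct (Z.le_gt_cases 3 (M - z)) as [Hk | Hk]; [| nia].
  destruct (Z.lt_ge_cases z ((M - z) * (M - z + 1))) as [Hlt | Hge]; [exact Hlt |].
  exfalso. nia.
Qed.

Lemma ell_eq_floor (m : nat) (k : Z) :
  (0 <= k)%Z ->
  IZR k ^ 2 < (INR m ^ 2 + INR m) / 2 < (IZR k + 1) ^ 2 ->
  Defs.f m (IZR k) <= Defs.f m (IZR k + 1) ->
  ell m = k.
Proof.
  intros Hk Hsq Hf. apply IZR_le in Hk.
  pose proof (lambda_sq m). pose proof (lambda_ge0 m).
  assert (Hlam : IZR k < lambda m < IZR k + 1) by (split; nra).
  unfold ell.
  rewrite (Rfloor_eq (lambda m) k), (Rceil_eq (lambda m) (k + 1)),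
    plus_IZR by (rewrite ?plus_IZR; lra).
  destruct Rle_dec; [reflexivity | contradiction].
Qed.

Lemma ell_7 : ell 7 = 5%Z.
Proof. apply ell_eq_floor; [lia | | unfold Defs.f, binom2]; simpl; lra. Qed.

Lemma ell_10 : ell 10 = 7%Z.
Proof. apply ell_eq_floor; [lia | | unfold Defs.f, binom2]; simpl; lra. Qed.

Lemma ell_11 : ell 11 = 8%Z.
Proof. apply ell_eq_floor; [lia | | unfold Defs.f, binom2]; simpl; lra. Qed.

Theorem proposition1p3 (m : nat) :
  (m = 7 \/ 10 <= m)%nat ->
  (ell m < (Z.of_nat m - ell m) * (Z.of_nat m - ell m + 1))%Z.
Proof.
  intros Hm.
  assert (Hcases : (m = 7 \/ m = 10 \/ m = 11 \/ 12 <= m)%nat) by lia.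
  destruct Hcases as [-> | [-> | [-> | Hm12]]].
  - rewrite ell_7. lia.
  - rewrite ell_10. lia.
  - rewrite ell_11. lia.
  - apply lt_pronic_sub; [lia | apply ell_pred_sq_lt].
Qed.
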